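(* Let $\mathbf{G}=(\mathbf{L},\mathbf{H})$ be a $2\times M$ partial-monitoring game with real matrices such that $\mathbf{L}=\mathbf{K}\mathbf{H}$ for some $\mathbf{K}\in\mathbb{R}^{2\times2}$. Then there exists a $2\times M$ bandit game $\mathbf{G}'=(\mathbf{L}',\mathbf{H}')$ (i.e. $\mathbf{L}'=\mathbf{H}'$) with $\mathbf{G}\le\mathbf{G}'$. If $\mathbf{K}=\begin{pmatrix}0&0\\1&1\end{pmatrix}$, then $\mathbf{G}'$ can be chosen with $\mathbf{G}\simeq\mathbf{G}'$.
   Context: A partial-monitoring game $\mathbf{G}=(\mathbf{L},\mathbf{H})$ has real $N\times M$ loss matrix $\mathbf{L}=(\ell_{ij})$ and feedback matrix $\mathbf{H}=(h_{ij})$ (here entries may be arbitrary reals); $\underline{n}=\{1,\dots,n\}$. Nature fixes an outcome sequence $J_1,J_2,\ldots\in\underline{M}$ in advance; at each time $t$ Learner chooses (possibly at random) $I_t\in\underline{N}$ based on internal randomization and past feedbacks $h_{I_s,J_s}$, $s<t$, then observes $h_{I_t,J_t}$ and suffers loss $\ell_{I_t,J_t}$; such a rule is a strategy $\mathcal{A}$. Regret $R_T(\mathcal{A},\mathbf{G})=\mathbb{E}\big[\sum_{t=1}^T\ell_{I_t,J_t}-\min_i\sum_{t=1}^T\ell_{i,J_t}\big]$. A bandit game is one with $\mathbf{H}=\mathbf{L}$. For two $N\times M$ games, $\mathbf{G}'\le\mathbf{G}$ means: for every algorithm $\mathcal{A}$ there is an algorithm $\mathcal{A}'$ such that, for every outcome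 sequence, $\mathcal{A}'$ on $\mathbf{G}'$ chooses the same action sequence as $\mathcal{A}$ on $\mathbf{G}$ and $R_T(\mathcal{A}',\mathbf{G}')\le R_T(\mathcal{A},\mathbf{G})$; $\mathbf{G}\simeq\mathbf{G}'$ means both $\mathbf{G}\le\mathbf{G}'$ and $\mathbf{G}'\le\mathbf{G}$. *)

From HB Require Import structures.
From mathcomp Require Import all_boot all_order all_algebra.
Set Implicit Arguments. Unset Strict Implicit. Unset Printing Implicit Defensive.
Import Order.TTheory GRing.Theory Num.Theory.
Local Open Scope ring_scope.

Section PM.
Variable R : realFieldType.
Variables N M : nat.

(* A (behavioural) randomized strategy: given the history of past
   (own action, observed feedback) pairs (oldest first), a probability
   distribution over the N actions. *)
Definition strategy := seq ('I_N * R) -> 'I_N -> R.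

Definition valid_strategy (A : strategy) : Prop :=
  (forall h i, 0 <= A h i) /\ (forall h, \sum_(i < N) A h i = 1).

(* Probability that, playing A on a game with feedback matrix H against the
   outcome sequence J (times 0,1,2,...), the first actions are exactly a,
   starting from history hist at time t. *)
Fixpoint path_prob (A : strategy) (H : 'M[R]_(N, M)) (J : nat -> 'I_M)
    (hist : seq ('I_N * R)) (t : nat) (a : seq 'I_N) : R :=
  match a with
  | [::] => 1
  | x :: a' => A hist x * path_prob A H J (rcons hist (x, H x (J t))) t.+1 a'
  end.

Definition act_prob A H J (a : seq 'I_N) : R := path_prob A H J [::] 0 a.

(* minimum of a function on 'I_N (0 if N = 0) *)
Definition fmin (f : 'I_N -> R) : R :=
  let s := [seq f i | i : 'I_N] in \big[Order.min/head 0 s]_(x <- s) x.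

Definition cumloss (L : 'M[R]_(N, M)) (J : nat -> 'I_M) (T : nat) (i : 'I_N) : R :=
  \sum_(t < T) L i (J t).

Definition regret (A : strategy) (L H : 'M[R]_(N, M)) (J : nat -> 'I_M) (T : nat) : R :=
  \sum_(a : T.-tuple 'I_N)
     act_prob A H J a * (\sum_(t < T) L (tnth a t) (J t) - fmin (cumloss L J T)).

Definition game_le (L1 H1 L2 H2 : 'M[R]_(N, M)) : Prop :=
  forall A, valid_strategy A ->
  exists A', valid_strategy A' /\
    forall (J : nat -> 'I_M) (T : nat),
      (forall a : T.-tuple 'I_N, act_prob A' H1 J a = act_prob A H2 J a) /\
      regret A' L1 H1 J T <= regret A L2 H2 J T.

Definition game_equiv (L1 H1 L2 H2 : 'M[R]_(N, M)) : Prop :=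
  game_le L1 H1 L2 H2 /\ game_le L2 H2 L1 H1.

End PM.

From HB Require Import structures.
From mathcomp Require Import all_boot all_order all_algebra.
From mathcomp Require Import ring.
Set Implicit Arguments. Unset Strict Implicit. Unset Printing Implicit Defensive.
Import Order.TTheory GRing.Theory Num.Theory.
Local Open Scope ring_scope.

(* Two facts about partial-monitoring games suffice.
   (1) Simulation: if the feedback of G2 = (L2,H2) is, action by action, a
       function of the feedback of G1 = (L1,H1) (H2 x j = f x (H1 x j)), then any
       algorithm A for G2 can be run on G1 by translating the observed history
       through f; the law of the action sequence is unchanged.  If moreover
       L2 = L1 + c for an outcome-dependent offset c (same for every action),
       the regret is unchanged too, since c shifts the learner's cumulative loss
       and the best action's cumulative loss alike.  Hence G1 <= G2.
   (2) For a 2 x M game with L = K H, rescaling row i of H by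
       s_i = K i i - K (1-i) i gives a matrix H' with H' = L + c, where
       c j = -(K 0 1 H 1 j + K 1 0 H 0 j).  So (H',H') is a bandit game and (1)
       gives (L,H) <= (H',H'); if both s_i are nonzero the rescaling is
       invertible and (1) also gives (H',H') <= (L,H).
   For K = [[0,0],[1,1]] the scales are s = (-1, 1), which yields equivalence. *)

Section MinShift.
Variable R : realFieldType.

Lemma min_shift (x y C : R) : Order.min (x + C) (y + C) = Order.min x y + C.
Proof. by rewrite !minEle lerD2r; case: ifP. Qed.

Lemma big_min_shift (C idx : R) (s : seq R) :
  \big[Order.min/idx + C]_(x <- [seq y + C | y <- s]) x =
  \big[Order.min/idx]_(x <- s) x + C.
Proof.
elim: s => [|y s IH]; first by rewrite !big_nil.
by rewrite /= !big_cons IH min_shift.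
Qed.

(* Nonemptiness of 'I_n.+1 matters: fmin of the empty family is 0. *)
Lemma fmin_shift (n : nat) (f g : 'I_n.+1 -> R) (C : R) :
  (forall i, g i = f i + C) -> fmin g = fmin f + C.
Proof.
move=> gE; rewrite /fmin.
have -> : [seq g i | i : 'I_n.+1] = [seq y + C | y <- [seq f i | i : 'I_n.+1]].
  by rewrite -map_comp; apply: eq_map.
have : size [seq f i | i : 'I_n.+1] = n.+1 by rewrite size_map -cardE card_ord.
by case: [seq f i | i : 'I_n.+1] => [|y s] // _; exact: big_min_shift.
Qed.

End MinShift.

Section Simulation.
Variables (R : realFieldType) (n M : nat).
Local Notation N := n.+1.

Definition simulate (f : 'I_N -> R -> R) (A : strategy R N) : strategy R N :=
  fun h => A [seq (p.1, f p.1 p.2) | p <- h].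

Lemma simulate_valid f A : valid_strategy A -> valid_strategy (simulate f A).
Proof. by case=> A_ge0 A_sum1; split=> [h i|h]; [apply: A_ge0 | apply: A_sum1]. Qed.

Lemma act_prob_simulate {f : 'I_N -> R -> R} {H1 H2 : 'M[R]_(N, M)} :
  (forall x j, H2 x j = f x (H1 x j)) ->
  forall A J a, act_prob (simulate f A) H1 J a = act_prob A H2 J a.
Proof.
move=> H2E A J a; rewrite /act_prob.
suff pathE : forall hist t, path_prob (simulate f A) H1 J hist t a =
    path_prob A H2 J [seq (p.1, f p.1 p.2) | p <- hist] t a by apply: pathE.
elim: a => [|x a IH] hist t //=.
by rewrite IH map_rcons /= -H2E.
Qed.

Lemma regret_offset {c : 'I_M -> R} {L1 L2 : 'M[R]_(N, M)} :
  (forall x j, L2 x j = L1 x j + c j) ->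
  forall A H J T, regret A L2 H J T = regret A L1 H J T.
Proof.
move=> L2E A H J T; rewrite /regret; apply: eq_bigr => a _; congr (_ * _).
have sumE (x : 'I_T -> 'I_N) :
    \sum_(t < T) L2 (x t) (J t) = \sum_(t < T) L1 (x t) (J t) + \sum_(t < T) c (J t).
  by rewrite -big_split; apply: eq_bigr => t _; rewrite L2E.
rewrite sumE (@fmin_shift _ _ (cumloss L1 J T) _ (\sum_(t < T) c (J t))).
  by rewrite opprD addrACA subrr addr0.
by move=> i; rewrite /cumloss (sumE (fun=> i)).
Qed.

Lemma game_le_simulation (f : 'I_N -> R -> R) (c : 'I_M -> R)
    (L1 H1 L2 H2 : 'M[R]_(N, M)) :
  (forall x j, H2 x j = f x (H1 x j)) ->
  (forall x j, L2 x j = L1 x j + c j) ->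
  game_le L1 H1 L2 H2.
Proof.
move=> H2E L2E A A_valid; exists (simulate f A).
split; first exact: simulate_valid.
move=> J T; split=> [a|]; first exact: act_prob_simulate H2E A J a.
rewrite (regret_offset L2E).
suff -> : regret (simulate f A) L1 H1 J T = regret A L1 H2 J T by [].
by apply: eq_bigr => a _; rewrite (act_prob_simulate H2E).
Qed.

End Simulation.

Section TwoActions.
Variables (R : realFieldType) (M : nat).
Implicit Types (K : 'M[R]_2) (H : 'M[R]_(2, M)).

Lemma mulmx2E K H i j : (K *m H) i j = K i 0 * H 0 j + K i 1 * H 1 j.
Proof. by rewrite mxE big_ord_recl big_ord1 (_ : lift 0 0 = 1) //; apply: val_inj. Qed.

Lemma ord2P (P : 'I_2 -> Prop) : P 0 -> P 1 -> forall i, P i.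
Proof. by move=> P0 P1 [[|[|//]] i_lt2]; [move: P0 | move: P1]; congr P; apply: val_inj. Qed.

Definition bandit_scale K (i : 'I_2) : R :=
  if i == 0 then K 0 0 - K 1 0 else K 1 1 - K 0 1.

Definition bandit_matrix K H : 'M[R]_(2, M) :=
  \matrix_(i, j) (bandit_scale K i * H i j).

Definition bandit_offset K H (j : 'I_M) : R := - (K 0 1 * H 1 j + K 1 0 * H 0 j).

Lemma bandit_matrix_offset K H L : L = K *m H ->
  forall i j, bandit_matrix K H i j = L i j + bandit_offset K H j.
Proof.
move=> -> + j; apply: ord2P; rewrite mulmx2E !mxE /bandit_scale /bandit_offset /=; ring.
Qed.

Lemma game_le_bandit K H L : L = K *m H ->
  game_le L H (bandit_matrix K H) (bandit_matrix K H).
Proof.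
move=> LE; apply: (game_le_simulation (c := bandit_offset K H)
                     (f := fun i v => bandit_scale K i * v)).
  by move=> i j; rewrite mxE.
exact: bandit_matrix_offset.
Qed.

(* With nonzero scales the rescaling can be undone, so the bandit game is
   also simulated by the original one. *)
Lemma game_equiv_bandit K H L : L = K *m H ->
  (forall i, bandit_scale K i != 0) ->
  game_equiv L H (bandit_matrix K H) (bandit_matrix K H).
Proof.
move=> LE s_neq0; split; first exact: game_le_bandit.
apply: (game_le_simulation (c := fun j => - bandit_offset K H j)
                           (f := fun i v => v / bandit_scale K i)).
  by move=> i j; rewrite mxE mulrC mulKf.
by move=> i j; rewrite (bandit_matrix_offset LE) addrK.
Qed.

End TwoActions.

Theorem proposition2 (R : realFieldType) (M : nat) (L H : 'M[R]_(2, M))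
    (K : 'M[R]_2) :
  L = K *m H ->
  (exists L' H' : 'M[R]_(2, M), L' = H' /\ game_le L H L' H') /\
  (K = \matrix_(i < 2, j < 2) (if i == ord0 then 0 else 1) ->
   exists L' H' : 'M[R]_(2, M), L' = H' /\ game_equiv L H L' H').
Proof.
move=> LE; split.
  by exists (bandit_matrix K H), (bandit_matrix K H); split; last exact: game_le_bandit.
move=> KE; exists (bandit_matrix K H), (bandit_matrix K H); split; first by [].
(* For this K the scales are -1 and 1. *)
apply: game_equiv_bandit; first exact: LE.
apply: ord2P; rewrite /bandit_scale KE !mxE /=;
  by rewrite ?sub0r ?subr0 ?oppr_eq0 oner_eq0.
Qed.
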